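(* Consider the affine discrete-time system $$x_{k+1}=Ax_k+Bu_k+e,\qquad y_k=Cx_k+Du_k+r,$$ with state $x_k\in\mathbb{R}^n$, input $u_k\in\mathbb{R}^m$, output $y_k\in\mathbb{R}^p$, matrices $A,B,C,D$ of compatible dimensions and constant vectors $e\in\mathbb{R}^n$, $r\in\mathbb{R}^p$. Let $\{u_k^{d},x_k^{d},y_k^{d}\}_{k=0}^{N-1}$ be an input-state-output trajectory of this system, and let $L\in\mathbb{N}$ with $L\le N$. Suppose the data $\{u_k^d\}_{k=0}^{N-1}$, $\{x_k^d\}_{k=0}^{N-L}$ are persistently exciting of order $L$, i.e. $$\operatorname{rank}\begin{bmatrix}H_L(u^d)\\ H_1(x^d_{[0,N-L]})\\ \mathbb{1}_{N-L+1}^\top\end{bmatrix}=mL+n+1 .$$ Then a sequence $\{u_k,y_k\}_{k=0}^{L-1}$ is an input-output trajectory of the system (for some initial state) if and only if there exists $\alpha\in\mathbb{R}^{N-L+1}$ such that $$\sum_{i=0}^{N-L}\alpha_i=1,\qquad \begin{bmatrix}H_L(u^d)\\ H_L(y^d)\end{bmatrix}\alpha=\begin{bmatrix}u\\ y\end{bmatrix},$$ where $u=(u_0^\top,\dots,u_{L-1}^\top)^\top$ and $y=(y_0^\top,\dots,y_{L-1}^\top)^\top$.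
   Context: For a sequence $\{z_k\}_{k=0}^{N-1}$, the Hankel matrix of depth $L$ is $$H_L(z)=\begin{bmatrix}z_0&z_1&\cdots&z_{N-L}\\ z_1&z_2&\cdots&z_{N-L+1}\\ \vdots&\vdots&\ddots&\vdots\\ z_{L-1}&z_L&\cdots&z_{N-1}\end{bmatrix},$$ and $z_{[a,b]}$ denotes the stacked window $(z_a^\top,\dots,z_b^\top)^\top$ (so $H_1(x^d_{[0,N-L]})=[x_0^d\ \cdots\ x_{N-L}^d]$). $\mathbb{1}_q$ denotes the $q$-dimensional column vector of ones. The matrices $A,B,C,D$ and vectors $e,r$ are unknown to the user but fixed. *)

From mathcomp Require Import all_boot all_order all_algebra.
Set Implicit Arguments. Unset Strict Implicit. Unset Printing Implicit Defensive.
Import Order.TTheory GRing.Theory Num.Theory.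
Local Open Scope ring_scope.

Lemma hankel_mod_lt (L q : nat) (i : 'I_(L * q)) : (i %% q < q)%N.
Proof.
case: q i => [|q] i; first by rewrite muln0 in i *; case: i.
by rewrite ltn_mod.
Qed.

(* Column j is the stacked window
   (z_j^T, ..., z_{j+L-1}^T)^T; row index i = a*q + b refers to
   component b of z_{j+a}. *)
Definition hankel (R : Type) (q L ncol : nat) (z : nat -> 'cV[R]_q)
  : 'M[R]_(L * q, ncol) :=
  \matrix_(i < L * q, j < ncol)
     z (j + i %/ q)%N (Ordinal (hankel_mod_lt i)) 0.

Definition stack (R : Type) (q L : nat) (z : nat -> 'cV[R]_q) : 'cV[R]_(L * q) :=
  hankel L 1 z.

(* An affine combination (weights summing to one) of shifted data windows is
   again a trajectory, since the dynamics are affine.  Persistency of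
   excitation makes every input window together with every initial state
   reachable as such a combination of the data columns, with the extra
   constraint [sum alpha = 1] supplied by the row of ones; as the output of a
   trajectory is determined by its input and initial state, the combination
   reproduces the given output as well. *)
From mathcomp Require Import all_boot all_order all_algebra.
From mathcomp Require Import zify.
Import Order.TTheory GRing.Theory Num.Theory.
Set Implicit Arguments. Unset Strict Implicit.
Local Open Scope ring_scope.

Definition window_comb (R : pzRingType) q nc (z : nat -> 'cV[R]_q)
    (al : 'cV[R]_nc) (a : nat) : 'cV[R]_q :=
  \sum_(j < nc) al j 0 *: z (j + a)%N.

Lemma mul_hankel_stack (R : comPzRingType) q L nc (z : nat -> 'cV[R]_q)
    (al : 'cV[R]_nc) :
  hankel L nc z *m al = stack L (window_comb z al).
Proof.
apply/matrixP => i c; rewrite ord1 !mxE summxE add0n.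
by apply: eq_bigr => j _; rewrite !mxE mulrC.
Qed.

Lemma eq_stack (R : Type) q L (v w : nat -> 'cV[R]_q) :
  stack L v = stack L w <-> forall a, (a < L)%N -> v a = w a.
Proof.
split=> [/matrixP vw a aL | vw].
- apply/matrixP => b c; rewrite ord1.
  have ab_lt : (a * q + b < L * q)%N.
    have : (a.+1 * q <= L * q)%N by rewrite leq_mul2r aL orbT.
    by rewrite mulSn; have := ltn_ord b; lia.
  have q_gt0 : (0 < q)%N := leq_ltn_trans (leq0n b) (ltn_ord b).
  have ab_div : ((a * q + b) %/ q = a)%N by rewrite divnMDl // divn_small ?addn0.
  have ab_mod : Ordinal (hankel_mod_lt (Ordinal ab_lt)) = b.
    by apply: val_inj; rewrite /= -modnDml modnMl add0n modn_small.
  by have := vw (Ordinal ab_lt) 0; rewrite !mxE ab_mod /= ab_div.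
- apply/matrixP => i c; rewrite ord1 !mxE add0n vw //.
  have : (0 < L * q)%N := leq_ltn_trans (leq0n i) (ltn_ord i).
  rewrite muln_gt0 => /andP [_ q_gt0].
  by rewrite ltn_divLR.
Qed.

Lemma window_comb_affine (R : comPzRingType) s k l nc (al : 'cV[R]_nc)
    (P : 'M[R]_(s, k)) (Q : 'M[R]_(s, l)) (c : 'cV[R]_s)
    (z : nat -> 'cV[R]_s) (f : nat -> 'cV[R]_k) (g : nat -> 'cV[R]_l) a b :
  \sum_(j < nc) al j 0 = 1 ->
  (forall j : 'I_nc, z (j + a)%N = P *m f (j + b)%N + Q *m g (j + b)%N + c) ->
  window_comb z al a = P *m window_comb f al b + Q *m window_comb g al b + c.
Proof.
move=> al_sum1 zfg; rewrite /window_comb (eq_bigr _ (fun j _ => congr1 _ (zfg j))).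
rewrite !mulmx_sumr -[c in RHS]scale1r -al_sum1 scaler_suml -!big_split.
by apply: eq_bigr => j _; rewrite !scalerDr -!scalemxAr.
Qed.

Section AffineSystem.

Variables (R : comPzRingType) (n m p : nat).
Variables (A : 'M[R]_n) (B : 'M[R]_(n, m)) (C : 'M[R]_(p, n)) (D : 'M[R]_(p, m)).
Variables (e : 'cV[R]_n) (r : 'cV[R]_p).

Definition is_trajectory (T : nat) (u : nat -> 'cV[R]_m)
    (x : nat -> 'cV[R]_n) (y : nat -> 'cV[R]_p) : Prop :=
  (forall k, (k.+1 < T)%N -> x k.+1 = A *m x k + B *m u k + e) /\
  (forall k, (k < T)%N -> y k = C *m x k + D *m u k + r).

Lemma eq_trajectory T u u' x y y' :
  (forall k, (k < T)%N -> u k = u' k) -> (forall k, (k < T)%N -> y k = y' k) ->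
  is_trajectory T u x y -> is_trajectory T u' x y'.
Proof.
move=> uu' yy' [xS yE]; split=> k kT.
- by rewrite xS // uu' // ltnW.
- by rewrite -yy' // yE // uu'.
Qed.

Lemma trajectory_state_eq T u x y x' y' :
  is_trajectory T u x y -> is_trajectory T u x' y' -> x 0%N = x' 0%N ->
  forall k, (k < T)%N -> x k = x' k.
Proof.
move=> [xS _] [x'S _] x0 k; elim: k => [//|k IH] kT.
by rewrite xS // x'S // IH // ltnW.
Qed.

Lemma trajectory_output_eq T u x y x' y' :
  is_trajectory T u x y -> is_trajectory T u x' y' -> x 0%N = x' 0%N ->
  forall k, (k < T)%N -> y k = y' k.
Proof.
move=> traj traj' x0 k kT; have xx' := trajectory_state_eq traj traj' x0 kT.
by rewrite traj.2 // traj'.2 // xx'.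
Qed.

Lemma window_comb_trajectory N L nc ud xd yd (al : 'cV[R]_nc) :
  (nc + L <= N.+1)%N -> \sum_(j < nc) al j 0 = 1 ->
  is_trajectory N ud xd yd ->
  is_trajectory L (window_comb ud al) (window_comb xd al) (window_comb yd al).
Proof.
move=> ncLN al_sum1 [xS yE].
have inN (j : 'I_nc) a : (a < L)%N -> (j + a < N)%N.
  by move=> aL; have := ltn_ord j; lia.
split=> a aL; apply: (window_comb_affine (b := a)) => // j.
- by rewrite addnS xS // -addnS inN.
- by rewrite yE // inN.
Qed.

End AffineSystem.

Lemma full_row_rank_mulmx_surj (F : fieldType) s t (M : 'M[F]_(s, t)) (v : 'cV[F]_s) :
  \rank M = s -> exists al : 'cV[F]_t, M *m al = v.
Proof.
move=> rkM; have /submxP [al vM] : (v^T <= M^T)%MS.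
  by apply: submx_full; rewrite /row_full mxrank_tr rkM.
by exists al^T; rewrite -[v]trmxK vM trmx_mul trmxK.
Qed.

Lemma const_row_mulmx (R : comPzRingType) t (al : 'cV[R]_t) :
  ((const_mx 1 : 'rV[R]_t) *m al) 0 0 = \sum_(j < t) al j 0.
Proof. by rewrite mxE; apply: eq_bigr => j _; rewrite mxE mul1r. Qed.

Theorem theorem1 (R : realFieldType) (n m p : nat)
  (A : 'M[R]_n) (B : 'M[R]_(n, m)) (C : 'M[R]_(p, n)) (D : 'M[R]_(p, m))
  (e : 'cV[R]_n) (r : 'cV[R]_p) (N L : nat)
  (ud : nat -> 'cV[R]_m) (xd : nat -> 'cV[R]_n) (yd : nat -> 'cV[R]_p)
  (Hx : forall k, (k.+1 < N)%N -> xd k.+1 = A *m xd k + B *m ud k + e)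
  (Hy : forall k, (k < N)%N -> yd k = C *m xd k + D *m ud k + r)
  (HLN : (L <= N)%N)
  (Hpe : \rank (col_mx (hankel L (N - L).+1 ud)
                 (col_mx (hankel 1 (N - L).+1 xd)
                         (const_mx 1 : 'rV[R]_((N - L).+1))))
         = (m * L + n + 1)%N) :
  forall (u : nat -> 'cV[R]_m) (y : nat -> 'cV[R]_p),
    (exists x : nat -> 'cV[R]_n,
        (forall k, (k.+1 < L)%N -> x k.+1 = A *m x k + B *m u k + e) /\
        (forall k, (k < L)%N -> y k = C *m x k + D *m u k + r))
    <->
    (exists alpha : 'cV[R]_((N - L).+1),
        \sum_(i < (N - L).+1) alpha i 0 = 1 /\
        col_mx (hankel L (N - L).+1 ud) (hankel L (N - L).+1 yd) *m alpha
        = col_mx (stack L u) (stack L y)).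
Proof.
move=> u y.
have data_traj : is_trajectory A B C D e r N ud xd yd by [].
have ncLN : ((N - L).+1 + L <= N.+1)%N by lia.
have rows : (m * L + n + 1 = L * m + (1 * n + 1))%N by lia.
rewrite rows in Hpe.
split=> [[x traj] | [al [al_sum1]]].
- have [al] := @full_row_rank_mulmx_surj _ _ _ _
    (col_mx (stack L u) (col_mx (stack 1 (fun=> x 0%N)) 1%:M)) Hpe.
  rewrite !mul_col_mx !mul_hankel_stack.
  move=> /eq_col_mx [/eq_stack u_comb /eq_col_mx [/eq_stack x0_comb /matrixP /(_ 0 0)]].
  rewrite const_row_mulmx mxE eqxx /= => al_sum1.
  exists al; split=> //; rewrite mul_col_mx !mul_hankel_stack.
  have comb_traj := eq_trajectory u_comb (fun _ _ => erefl)
    (window_comb_trajectory ncLN al_sum1 data_traj).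
  congr col_mx; apply/eq_stack; first exact: u_comb.
  exact: trajectory_output_eq comb_traj traj (x0_comb 0%N isT).
- rewrite mul_col_mx !mul_hankel_stack => /eq_col_mx [/eq_stack u_comb /eq_stack y_comb].
  exists (window_comb xd al).
  exact: eq_trajectory u_comb y_comb (window_comb_trajectory ncLN al_sum1 data_traj).
Qed.
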